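(* Let $N,L\ge1$. Then for any $k\in\mathbb{R}^2$ and any $A\ge|k|$, the set \[ \{k'\in\mathbb{R}^2:\ |k'|\le N,\ |k-k'|\le N,\ |k'|+|k-k'|\in[A,A+L]\} \] can be covered by at most $O(N^{\frac32}L^{\frac12})$ squares of unit side length, with the implied constant independent of $N,L,k,A$. *)

From Stdlib Require Import Reals List.
Open Scope R_scope.

Definition norm2 (p : R * R) : R := sqrt (fst p ^ 2 + snd p ^ 2).

Definition sub2 (p q : R * R) : R * R := (fst p - fst q, snd p - snd q).

Definition in_unit_square (c p : R * R) : Prop :=
  fst c <= fst p <= fst c + 1 /\ snd c <= snd p <= snd c + 1.

Definition shell_set (N L A : R) (k : R * R) (k' : R * R) : Prop :=
  norm2 k' <= N /\ norm2 (sub2 k k') <= N /\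
  A <= norm2 k' + norm2 (sub2 k k') <= A + L.

(* Cut the disc |k'| <= N into about 2N vertical strips of unit width.  Inside a
   strip the focal sum |p| + |k - p| changes by at most 2, so it suffices to cover,
   on a single vertical line, the y with s1 <= |p| + |k - p| <= s2, where
   s1 = A - 2 and s2 = A + L + 2.  The sublevel set {|p| + |k - p| <= s} is the
   ellipse with foci 0 and k, which meets the line in an explicit segment.  After
   exchanging coordinates so that |k2| <= |k1|, the centre of that segment moves by
   O(s2 - s1) and its half-length grows by O(sqrt (s2 (s2 - s1))) as s goes from s1
   to s2, so the slice consists of two intervals of length O(L + sqrt (N L)) (for
   L > N the whole segment |y| <= N is cheaper).  The N^(3/2) L^(1/2) bound follows
   by summing over the strips. *)

From Stdlib Require Import Reals List Lra Lia Psatz ZArith.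
Open Scope R_scope.

Definition covers_line (ts : list R) (S : R -> Prop) : Prop :=
  forall y, S y -> exists t, In t ts /\ t <= y <= t + 1.

Definition covers (squares : list (R * R)) (S : R * R -> Prop) : Prop :=
  forall p, S p -> exists c, In c squares /\ in_unit_square c p.

Lemma nat_floor_exists (t : R) : 0 <= t -> exists j : nat, INR j <= t < INR j + 1.
Proof.
  intros Ht. destruct (base_Int_part t) as [H1 H2].
  assert (Hz : (-1 < Int_part t)%Z) by (apply lt_IZR; simpl; lra).
  exists (Z.to_nat (Int_part t)). rewrite INR_IZR_INZ, Z2Nat.id by lia. lra.
Qed.

Lemma nat_ceil_exists (t : R) : 0 < t -> exists n : nat, t < INR n <= t + 1.
Proof.
  intros Ht. destruct (archimed t) as [H1 H2].
  assert (Hz : (0 < up t)%Z) by (apply lt_IZR; simpl; lra).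
  exists (Z.to_nat (up t)). rewrite INR_IZR_INZ, Z2Nat.id by lia. lra.
Qed.

Lemma covers_line_interval (a b : R) :
  exists ts, INR (length ts) <= Rmax 0 (b - a) + 2 /\
             covers_line ts (fun y => a <= y <= b).
Proof.
  destruct (Rlt_dec b a) as [Hba | Hab].
  - exists nil. split.
    + simpl. unfold Rmax. destruct Rle_dec; lra.
    + intros y Hy. lra.
  - destruct (nat_ceil_exists (b - a + 1)) as [n Hn]; [lra |].
    exists (map (fun j => a + INR j) (seq 0 n)). split.
    + rewrite length_map, length_seq. unfold Rmax. destruct Rle_dec; lra.
    + intros y Hy. destruct (nat_floor_exists (y - a)) as [j Hj]; [lra |].
      exists (a + INR j). split; [| lra].
      apply (in_map (fun j => a + INR j)), in_seq. split; [lia |]. apply INR_lt. simpl. lra.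
Qed.

Lemma covers_line_app (ts1 ts2 : list R) (S S1 S2 : R -> Prop) :
  (forall y, S y -> S1 y \/ S2 y) ->
  covers_line ts1 S1 -> covers_line ts2 S2 -> covers_line (ts1 ++ ts2) S.
Proof.
  intros HS H1 H2 y Hy.
  destruct (HS y Hy) as [Hy1 | Hy2].
  - destruct (H1 y Hy1) as [t [Ht Hyt]]. exists t. split; [apply in_or_app; left |]; auto.
  - destruct (H2 y Hy2) as [t [Ht Hyt]]. exists t. split; [apply in_or_app; right |]; auto.
Qed.

Lemma covers_column (x0 : R) (ts : list R) (S : R -> Prop) :
  covers_line ts S ->
  covers (map (fun t => (x0, t)) ts) (fun p => x0 <= fst p <= x0 + 1 /\ S (snd p)).
Proof.
  intros H [x y] [Hx Hy]. destruct (H y Hy) as [t [Ht Hyt]].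
  exists (x0, t). split; [apply (in_map (fun t => (x0, t))); auto |].
  unfold in_unit_square. simpl in *. lra.
Qed.

Lemma covers_indexed_union (S : nat -> R * R -> Prop) (B : R) (M : nat) :
  0 <= B ->
  (forall m, (m < M)%nat -> exists sq, INR (length sq) <= B /\ covers sq (S m)) ->
  exists sq, INR (length sq) <= INR M * B /\
             covers sq (fun p => exists m, (m < M)%nat /\ S m p).
Proof.
  intros HB. induction M as [| M IH]; intros H.
  - exists nil. split; [simpl; lra |]. intros p [m [Hm _]]. lia.
  - destruct IH as [sq [Hl Hc]]; [intros m Hm; apply H; lia |].
    destruct (H M ltac:(lia)) as [sq' [Hl' Hc']].
    exists (sq ++ sq'). split.
    + rewrite length_app, plus_INR, S_INR, Rmult_plus_distr_r, Rmult_1_l. lra.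
    + intros p [m [Hm Hp]]. destruct (Nat.eq_dec m M) as [-> | Hne].
      * destruct (Hc' p Hp) as [c [Hin Hcp]]. exists c. split; [apply in_or_app; right |]; auto.
      * assert (HmM : (m < M)%nat) by lia.
        destruct (Hc p (ex_intro _ m (conj HmM Hp))) as [c [Hin Hcp]].
        exists c. split; [apply in_or_app; left |]; auto.
Qed.

Lemma covers_weaken (sq : list (R * R)) (S S' : R * R -> Prop) :
  (forall p, S' p -> S p) -> covers sq S -> covers sq S'.
Proof. intros HS H p Hp. exact (H p (HS p Hp)). Qed.

Lemma covers_swap (sq : list (R * R)) (S : R * R -> Prop) :
  covers sq S ->
  covers (map (fun c => (snd c, fst c)) sq) (fun p => S (snd p, fst p)).
Proof.
  intros H [x y] Hp. destruct (H (y, x) Hp) as [[c1 c2] [Hin Hc]].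
  exists (c2, c1). split; [apply (in_map (fun c => (snd c, fst c))) in Hin; auto |].
  unfold in_unit_square in *. simpl in *. tauto.
Qed.

Lemma sqrt_le_of_le_sq (a b : R) : 0 <= b -> a <= b ^ 2 -> sqrt a <= b.
Proof. intros Hb Ha. rewrite <- (sqrt_pow2 b Hb). apply sqrt_le_1_alt. exact Ha. Qed.

Lemma le_sqrt_of_sq_le (a b : R) : 0 <= a -> a ^ 2 <= b -> a <= sqrt b.
Proof. intros Ha Hb. rewrite <- (sqrt_pow2 a Ha). apply sqrt_le_1_alt. exact Hb. Qed.

Lemma le_sqrt_mul (a b : R) : 0 <= a <= b -> a <= sqrt (a * b).
Proof. intros Hab. apply le_sqrt_of_sq_le; nra. Qed.

Lemma sqrt_le_add (a b t : R) : 0 <= a -> 0 <= t -> b <= a + t ^ 2 ->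
  sqrt b <= sqrt a + t.
Proof.
  intros Ha Ht Hb. pose proof (sqrt_pos a). pose proof (pow2_sqrt a Ha).
  apply sqrt_le_of_le_sq; nra.
Qed.

Lemma Rabs_le_sqrt_sum_sq (x y : R) : Rabs x <= sqrt (x ^ 2 + y ^ 2).
Proof.
  apply le_sqrt_of_sq_le; [apply Rabs_pos |].
  rewrite <- Rsqr_pow2, <- Rsqr_abs, Rsqr_pow2. pose proof (pow2_ge_0 y). lra.
Qed.

Lemma sqrt_sum_sq_lipschitz (a b y : R) :
  sqrt (a ^ 2 + y ^ 2) <= sqrt (b ^ 2 + y ^ 2) + Rabs (a - b).
Proof.
  pose proof (Rabs_le_sqrt_sum_sq b y). pose proof (Rabs_pos b).
  pose proof (Rabs_pos (a - b)). pose proof (sqrt_pos (b ^ 2 + y ^ 2)).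
  pose proof (pow2_sqrt (b ^ 2 + y ^ 2) ltac:(nra)).
  assert (b * (a - b) <= Rabs b * Rabs (a - b)) by (rewrite <- Rabs_mult; apply Rle_abs).
  assert (Rabs (a - b) ^ 2 = (a - b) ^ 2) by (rewrite <- !Rsqr_pow2; symmetry; apply Rsqr_abs).
  apply sqrt_le_of_le_sq; nra.
Qed.

Lemma Rdiv_le_upper_bound (a b c : R) : 0 < b -> a <= c * b -> a / b <= c.
Proof.
  intros Hb H. apply (Rmult_le_reg_r b); [exact Hb |]. unfold Rdiv.
  rewrite Rmult_assoc, Rinv_l, Rmult_1_r by lra. exact H.
Qed.

Lemma Rabs_le_of_sq_le (a b : R) : 0 <= b -> a ^ 2 <= b ^ 2 -> Rabs a <= b.
Proof.
  intros Hb H. rewrite <- (Rabs_right b) by lra. apply Rsqr_le_abs_0.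
  rewrite !Rsqr_pow2. exact H.
Qed.

Definition focal_sum (k1 k2 x y : R) : R :=
  sqrt (x ^ 2 + y ^ 2) + sqrt ((k1 - x) ^ 2 + (k2 - y) ^ 2).

(* For |k| < s the vertical line through x meets the ellipse
   {p | |p| + |k - p| <= s} in the segment with centre [chord_center] and
   half-length [chord_radius]; [chord_disc] is the discriminant of the quadratic
   equation in y describing the boundary, in factored form. *)
Definition chord_disc (k1 k2 s x : R) : R :=
  (s ^ 2 - (k1 ^ 2 + k2 ^ 2)) * (s ^ 2 - k2 ^ 2 - (2 * x - k1) ^ 2).

Definition chord_center (k1 k2 s x : R) : R :=
  (s ^ 2 - (k1 ^ 2 + k2 ^ 2) + 2 * k1 * x) * k2 / (2 * (s ^ 2 - k2 ^ 2)).

Definition chord_radius (k1 k2 s x : R) : R :=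
  s / (2 * (s ^ 2 - k2 ^ 2)) * sqrt (chord_disc k1 k2 s x).

Lemma dot_le_norms (k1 k2 x y : R) :
  k1 * x + k2 * y <= sqrt (k1 ^ 2 + k2 ^ 2) * sqrt (x ^ 2 + y ^ 2).
Proof. rewrite <- !Rsqr_pow2. apply sqrt_cauchy. Qed.

Lemma sqrt_sum_sq_sq (x y : R) : sqrt (x ^ 2 + y ^ 2) ^ 2 = x ^ 2 + y ^ 2.
Proof. apply pow2_sqrt. pose proof (pow2_ge_0 x). pose proof (pow2_ge_0 y). lra. Qed.

Lemma norm_bound_of_focal_sum_le (k1 k2 s x y : R) :
  focal_sum k1 k2 x y <= s ->
  2 * s * sqrt (x ^ 2 + y ^ 2) <= s ^ 2 - (k1 ^ 2 + k2 ^ 2) + 2 * (k1 * x + k2 * y).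
Proof.
  unfold focal_sum. intros Hg.
  pose proof (sqrt_sum_sq_sq x y). pose proof (sqrt_sum_sq_sq (k1 - x) (k2 - y)).
  pose proof (sqrt_pos (x ^ 2 + y ^ 2)). pose proof (sqrt_pos ((k1 - x) ^ 2 + (k2 - y) ^ 2)).
  nra.
Qed.

Lemma focal_sum_lt_of_norm_bound (k1 k2 s x y : R) :
  0 < s -> k1 ^ 2 + k2 ^ 2 < s ^ 2 ->
  4 * s ^ 2 * (x ^ 2 + y ^ 2) < (s ^ 2 - (k1 ^ 2 + k2 ^ 2) + 2 * (k1 * x + k2 * y)) ^ 2 ->
  focal_sum k1 k2 x y < s.
Proof.
  unfold focal_sum. intros Hs Hk HW.
  set (W := s ^ 2 - (k1 ^ 2 + k2 ^ 2) + 2 * (k1 * x + k2 * y)) in *.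
  set (r1 := sqrt (x ^ 2 + y ^ 2)). set (r2 := sqrt ((k1 - x) ^ 2 + (k2 - y) ^ 2)).
  set (K := sqrt (k1 ^ 2 + k2 ^ 2)).
  assert (Er1 : r1 ^ 2 = x ^ 2 + y ^ 2) by apply sqrt_sum_sq_sq.
  assert (Er2 : r2 ^ 2 = (k1 - x) ^ 2 + (k2 - y) ^ 2) by apply sqrt_sum_sq_sq.
  assert (EK : K ^ 2 = k1 ^ 2 + k2 ^ 2) by apply sqrt_sum_sq_sq.
  assert (Hr1 : 0 <= r1) by apply sqrt_pos. assert (Hr2 : 0 <= r2) by apply sqrt_pos.
  assert (HK0 : 0 <= K) by apply sqrt_pos.
  assert (HKs : K < s) by nra.
  assert (Hdot : - (K * r1) <= k1 * x + k2 * y <= K * r1).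
  { split.
    - pose proof (dot_le_norms (- k1) (- k2) x y) as Hneg.
      replace ((- k1) ^ 2 + (- k2) ^ 2) with (k1 ^ 2 + k2 ^ 2) in Hneg by ring.
      fold K r1 in Hneg. lra.
    - apply dot_le_norms. }
  destruct (Rle_lt_dec 0 W) as [HW0 | HW0].
  - assert (Hr1W : 2 * s * r1 < W) by nra.
    assert (Hr1s : r1 < s) by (unfold W in Hr1W; nra).
    assert (Hr2s : r2 ^ 2 < (s - r1) ^ 2) by (unfold W in Hr1W; nra).
    nra.
  - exfalso. unfold W in HW, HW0. nra.
Qed.

Section Chord.

Variables k1 k2 s : R.
Hypothesis Hs : 0 < s.
Hypothesis Hk : k1 ^ 2 + k2 ^ 2 < s ^ 2.

Let d := 2 * (s ^ 2 - k2 ^ 2).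

Lemma chord_denom_pos : 0 < d.
Proof. unfold d. pose proof (pow2_ge_0 k1). lra. Qed.

Lemma chord_identity (x y : R) :
  ((y - chord_center k1 k2 s x) * d) ^ 2 - s ^ 2 * chord_disc k1 k2 s x =
  (s ^ 2 - k2 ^ 2) *
  (4 * s ^ 2 * (x ^ 2 + y ^ 2) - (s ^ 2 - (k1 ^ 2 + k2 ^ 2) + 2 * (k1 * x + k2 * y)) ^ 2).
Proof.
  pose proof chord_denom_pos. unfold chord_center, chord_disc, d in *. field. lra.
Qed.

Lemma chord_radius_scaled (x : R) : chord_radius k1 k2 s x * d = s * sqrt (chord_disc k1 k2 s x).
Proof. pose proof chord_denom_pos. unfold chord_radius, d in *. field. lra. Qed.

Lemma chord_of_focal_sum_le (x y : R) :
  focal_sum k1 k2 x y <= s ->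
  chord_center k1 k2 s x - chord_radius k1 k2 s x <= y <=
  chord_center k1 k2 s x + chord_radius k1 k2 s x.
Proof.
  intros Hg. pose proof chord_denom_pos as Hd.
  pose proof (norm_bound_of_focal_sum_le _ _ _ _ _ Hg) as HW.
  pose proof (chord_identity x y) as HI.
  pose proof (sqrt_sum_sq_sq x y). pose proof (sqrt_pos (x ^ 2 + y ^ 2)).
  set (v := (y - chord_center k1 k2 s x) * d) in *.
  set (D := chord_disc k1 k2 s x) in *.
  assert (Hk2 : 0 < s ^ 2 - k2 ^ 2) by (pose proof (pow2_ge_0 k1); lra).
  assert (HW2 : 4 * s ^ 2 * (x ^ 2 + y ^ 2) <=
                (s ^ 2 - (k1 ^ 2 + k2 ^ 2) + 2 * (k1 * x + k2 * y)) ^ 2).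
  { assert (0 <= 2 * s * sqrt (x ^ 2 + y ^ 2)) by (apply Rmult_le_pos; lra).
    rewrite <- sqrt_sum_sq_sq. nra. }
  assert (Hv : v ^ 2 <= s ^ 2 * D) by nra.
  assert (HD : 0 <= D) by nra.
  cut (Rabs (y - chord_center k1 k2 s x) <= chord_radius k1 k2 s x).
  { intros Habs. pose proof (Rle_abs (y - chord_center k1 k2 s x)).
    pose proof (Rle_abs (- (y - chord_center k1 k2 s x))). rewrite Rabs_Ropp in *. lra. }
  apply (Rmult_le_reg_r d); [exact Hd |].
  rewrite chord_radius_scaled. fold D.
  rewrite <- (Rabs_right d) by lra. rewrite <- Rabs_mult. fold v.
  rewrite <- (Rabs_right (s * sqrt D)) by (pose proof (sqrt_pos D); nra).
  apply Rsqr_le_abs_0. rewrite !Rsqr_pow2, Rpow_mult_distr, pow2_sqrt by exact HD. exact Hv.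
Qed.

Lemma focal_sum_lt_of_chord (x y : R) :
  chord_center k1 k2 s x - chord_radius k1 k2 s x < y <
  chord_center k1 k2 s x + chord_radius k1 k2 s x ->
  focal_sum k1 k2 x y < s.
Proof.
  intros Hy. pose proof chord_denom_pos as Hd.
  assert (Habs : Rabs (y - chord_center k1 k2 s x) < chord_radius k1 k2 s x)
    by (apply Rabs_def1; lra).
  set (D := chord_disc k1 k2 s x).
  assert (HD : 0 <= D).
  { apply Rnot_lt_le. intros HD. pose proof (Rabs_pos (y - chord_center k1 k2 s x)).
    unfold chord_radius in Habs. fold D in Habs. rewrite sqrt_neg_0 in Habs by lra.
    unfold Rdiv in Habs. lra. }
  apply focal_sum_lt_of_norm_bound; [exact Hs | exact Hk |].
  pose proof (chord_identity x y) as HI.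
  set (v := (y - chord_center k1 k2 s x) * d) in *. fold D in HI.
  assert (Hv : Rabs v < s * sqrt D).
  { unfold v. rewrite Rabs_mult, (Rabs_right d) by lra.
    unfold D. rewrite <- chord_radius_scaled. apply Rmult_lt_compat_r; [exact Hd | exact Habs]. }
  assert (Hv2 : v ^ 2 < s ^ 2 * D).
  { rewrite <- (pow2_sqrt D HD), <- Rpow_mult_distr, <- !Rsqr_pow2.
    apply Rsqr_lt_abs_1. rewrite (Rabs_right (s * sqrt D)); [exact Hv |].
    pose proof (sqrt_pos D). nra. }
  assert (Hk2 : 0 < s ^ 2 - k2 ^ 2) by (pose proof (pow2_ge_0 k1); lra).
  nra.
Qed.

End Chord.

Lemma chord_weight_le (k2 s : R) : 0 < s -> 2 * k2 ^ 2 < s ^ 2 ->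
  s * (s / (2 * (s ^ 2 - k2 ^ 2))) <= 1.
Proof.
  intros Hs Hk. replace (s * (s / (2 * (s ^ 2 - k2 ^ 2)))) with (s ^ 2 / (2 * (s ^ 2 - k2 ^ 2)))
    by (unfold Rdiv; ring).
  pose proof (pow2_ge_0 k2). apply Rdiv_le_upper_bound; lra.
Qed.

Lemma chord_radius_le_of_disc_le (k1 k2 s x L : R) :
  0 < s -> 0 <= L -> k2 ^ 2 <= k1 ^ 2 -> k1 ^ 2 + k2 ^ 2 < s ^ 2 ->
  chord_disc k1 k2 s x <= 2 * s ^ 3 * L ->
  chord_radius k1 k2 s x <= 2 * sqrt (s * L).
Proof.
  intros Hs HL Hkk Hk HD. unfold chord_radius.
  set (w := s / (2 * (s ^ 2 - k2 ^ 2))).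
  assert (Hw : 0 <= w) by (unfold w; apply Rle_mult_inv_pos; nra).
  assert (Hws : s * w <= 1) by (apply chord_weight_le; lra).
  assert (HsL : 0 <= s * L) by nra.
  pose proof (sqrt_pos (s * L)). pose proof (pow2_sqrt (s * L) HsL).
  assert (HsqD : sqrt (chord_disc k1 k2 s x) <= s * (2 * sqrt (s * L))).
  { apply sqrt_le_of_le_sq; [nra |]. replace ((s * (2 * sqrt (s * L))) ^ 2)
      with (4 * s ^ 2 * sqrt (s * L) ^ 2) by ring. nra. }
  pose proof (sqrt_pos (chord_disc k1 k2 s x)). nra.
Qed.

Lemma chord_disc_le_of_no_chord (k1 k2 s1 s2 x : R) :
  0 < s2 -> s1 <= s2 -> k1 ^ 2 + k2 ^ 2 < s2 ^ 2 ->
  s1 <= 0 \/ s1 ^ 2 <= k1 ^ 2 + k2 ^ 2 \/ chord_disc k1 k2 s1 x < 0 ->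
  chord_disc k1 k2 s2 x <= 2 * s2 ^ 3 * (s2 - s1).
Proof.
  intros Hs2 Hs12 Hk Hno. unfold chord_disc in *.
  set (E2 := s2 ^ 2 - (k1 ^ 2 + k2 ^ 2)). set (F2 := s2 ^ 2 - k2 ^ 2 - (2 * x - k1) ^ 2).
  pose proof (pow2_ge_0 k1). pose proof (pow2_ge_0 k2). pose proof (pow2_ge_0 (2 * x - k1)).
  assert (HE2 : 0 < E2 <= s2 ^ 2) by (unfold E2; lra).
  assert (HF2 : F2 <= s2 ^ 2) by (unfold F2; lra).
  assert (Hgrow : s2 ^ 2 - s1 ^ 2 <= 2 * s2 * (s2 - s1)) by nra.
  assert (Hsmall : E2 <= 2 * s2 * (s2 - s1) \/ F2 <= 2 * s2 * (s2 - s1)).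
  { destruct (Rle_lt_dec (s1 ^ 2) (k1 ^ 2 + k2 ^ 2)) as [HK | HK].
    { left. unfold E2. lra. }
    destruct Hno as [Hs1 | [HK' | HD1]].
    - left. nra.
    - lra.
    - right. assert (s1 ^ 2 - k2 ^ 2 - (2 * x - k1) ^ 2 < 0) by nra.
      unfold F2. lra. }
  assert (0 <= 2 * s2 ^ 3 * (s2 - s1)) by (assert (0 < s2 ^ 3) by (apply pow_lt; lra); nra).
  destruct (Rle_lt_dec F2 0) as [HF0 | HF0]; [nra |].
  replace (2 * s2 ^ 3 * (s2 - s1)) with (2 * s2 * (s2 - s1) * s2 ^ 2) by ring.
  destruct Hsmall; nra.
Qed.

Section ChordVariation.

Variables k1 k2 x s1 s2 : R.
(* Keeps the denominator 2 (s^2 - k2^2) above s^2; this is why the theorem is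
   first proved for |k2| <= |k1|. *)
Hypothesis Hkk : k2 ^ 2 <= k1 ^ 2.
Hypothesis Hs1 : 0 < s1.
Hypothesis Hs12 : s1 <= s2.
Hypothesis Hk1 : k1 ^ 2 + k2 ^ 2 < s1 ^ 2.
Hypothesis HD1 : 0 <= chord_disc k1 k2 s1 x.

Lemma chord_line_bound : (2 * x - k1) ^ 2 <= s1 ^ 2 - k2 ^ 2.
Proof.
  unfold chord_disc in HD1. apply Rnot_lt_le. intros H.
  assert (0 < (s1 ^ 2 - (k1 ^ 2 + k2 ^ 2)) * ((2 * x - k1) ^ 2 - (s1 ^ 2 - k2 ^ 2)))
    by (apply Rmult_lt_0_compat; lra).
  lra.
Qed.

Lemma chord_center_shift :
  Rabs (chord_center k1 k2 s2 x - chord_center k1 k2 s1 x) <= 4 * (s2 - s1).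
Proof.
  pose proof chord_line_bound as Hline.
  pose proof (pow2_ge_0 k1). pose proof (pow2_ge_0 k2). pose proof (pow2_ge_0 (2 * x - k1)).
  set (a1 := s1 ^ 2 - k2 ^ 2). set (a2 := s2 ^ 2 - k2 ^ 2).
  assert (Ha1 : s1 ^ 2 / 2 <= a1) by (unfold a1; lra).
  assert (Ha2 : s2 ^ 2 / 2 <= a2) by (unfold a2; nra).
  set (M := k1 * k2 * (2 * x - k1)).
  set (q := chord_center k1 k2 s2 x - chord_center k1 k2 s1 x).
  assert (Eq : q * (2 * a1 * a2) = M * (a1 - a2)).
  { unfold q, M, a1, a2, chord_center. field. split; nra. }
  assert (HM : Rabs M <= s1 ^ 3).
  { unfold M. rewrite !Rabs_mult.
    assert (Rabs k1 <= s1) by (apply Rabs_le_of_sq_le; lra).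
    assert (Rabs k2 <= s1) by (apply Rabs_le_of_sq_le; lra).
    assert (Rabs (2 * x - k1) <= s1) by (apply Rabs_le_of_sq_le; lra).
    pose proof (Rabs_pos k1). pose proof (Rabs_pos k2). pose proof (Rabs_pos (2 * x - k1)).
    replace (s1 ^ 3) with (s1 * s1 * s1) by ring.
    repeat apply Rmult_le_compat; auto; apply Rmult_le_pos; auto. }
  assert (Hq : Rabs q * (2 * a1 * a2) <= s1 ^ 3 * (s2 ^ 2 - s1 ^ 2)).
  { rewrite <- (Rabs_right (2 * a1 * a2)) by nra. rewrite <- Rabs_mult, Eq, Rabs_mult.
    rewrite (Rabs_left1 (a1 - a2)) by (unfold a1, a2; nra).
    apply Rmult_le_compat; try apply Rabs_pos; unfold a1, a2; nra. }
  pose proof (Rabs_pos q).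
  set (P := s1 ^ 2 * s2 ^ 2).
  assert (HP : 0 < P) by (unfold P; apply Rmult_lt_0_compat; nra).
  assert (Hden : P <= 4 * a1 * a2) by (unfold P; nra).
  assert (Hnum : s1 ^ 3 * (s2 ^ 2 - s1 ^ 2) <= 2 * P * (s2 - s1)).
  { replace (s1 ^ 3 * (s2 ^ 2 - s1 ^ 2)) with (s1 ^ 2 * (s2 - s1) * (s1 * (s1 + s2))) by ring.
    replace (2 * P * (s2 - s1)) with (s1 ^ 2 * (s2 - s1) * (2 * s2 ^ 2)) by (unfold P; ring).
    apply Rmult_le_compat_l; nra. }
  apply (Rmult_le_reg_r P); [exact HP |].
  apply Rle_trans with (Rabs q * (4 * a1 * a2)); [apply Rmult_le_compat_l; lra |].
  lra.
Qed.

Lemma chord_disc_growth :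
  chord_disc k1 k2 s2 x <= chord_disc k1 k2 s1 x + 4 * s2 ^ 3 * (s2 - s1).
Proof.
  pose proof chord_line_bound.
  pose proof (pow2_ge_0 k1). pose proof (pow2_ge_0 k2). pose proof (pow2_ge_0 (2 * x - k1)).
  assert (E : chord_disc k1 k2 s2 x - chord_disc k1 k2 s1 x =
              (s2 ^ 2 - s1 ^ 2) *
              ((s2 ^ 2 - (k1 ^ 2 + k2 ^ 2)) + (s1 ^ 2 - k2 ^ 2 - (2 * x - k1) ^ 2)))
    by (unfold chord_disc; ring).
  assert (0 <= s2 ^ 2 - s1 ^ 2 <= 2 * s2 * (s2 - s1)) by (split; nra).
  assert (0 <= (s2 ^ 2 - (k1 ^ 2 + k2 ^ 2)) + (s1 ^ 2 - k2 ^ 2 - (2 * x - k1) ^ 2) <= 2 * s2 ^ 2)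
    by (split; nra).
  assert (chord_disc k1 k2 s2 x - chord_disc k1 k2 s1 x <= 2 * s2 * (s2 - s1) * (2 * s2 ^ 2))
    by (rewrite E; apply Rmult_le_compat; lra).
  lra.
Qed.

Lemma chord_weight_antitone :
  s2 / (2 * (s2 ^ 2 - k2 ^ 2)) <= s1 / (2 * (s1 ^ 2 - k2 ^ 2)).
Proof.
  pose proof (pow2_ge_0 k1). pose proof (pow2_ge_0 k2).
  assert (Ha1 : 0 < s1 ^ 2 - k2 ^ 2) by lra. assert (Ha2 : 0 < s2 ^ 2 - k2 ^ 2) by nra.
  assert (E : s1 / (2 * (s1 ^ 2 - k2 ^ 2)) - s2 / (2 * (s2 ^ 2 - k2 ^ 2)) =
              (s2 - s1) * (s1 * s2 + k2 ^ 2) / (2 * (s1 ^ 2 - k2 ^ 2) * (s2 ^ 2 - k2 ^ 2)))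
    by (field; lra).
  assert (0 <= (s2 - s1) * (s1 * s2 + k2 ^ 2) / (2 * (s1 ^ 2 - k2 ^ 2) * (s2 ^ 2 - k2 ^ 2))).
  { apply Rle_mult_inv_pos; [| apply Rmult_lt_0_compat; lra]. apply Rmult_le_pos; nra. }
  lra.
Qed.

Lemma chord_radius_growth :
  chord_radius k1 k2 s2 x <= chord_radius k1 k2 s1 x + 2 * sqrt (s2 * (s2 - s1)).
Proof.
  unfold chord_radius.
  set (w1 := s1 / (2 * (s1 ^ 2 - k2 ^ 2))). set (w2 := s2 / (2 * (s2 ^ 2 - k2 ^ 2))).
  set (D1 := chord_disc k1 k2 s1 x). set (D2 := chord_disc k1 k2 s2 x).
  pose proof (pow2_ge_0 k1). pose proof (pow2_ge_0 k2).
  assert (Hw : w2 <= w1) by apply chord_weight_antitone.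
  assert (Hw2 : 0 <= w2) by (apply Rle_mult_inv_pos; nra).
  assert (Hws : s2 * w2 <= 1) by (apply chord_weight_le; nra).
  set (t := sqrt (s2 * (s2 - s1))).
  assert (Ht : 0 <= t) by apply sqrt_pos.
  assert (Et : t ^ 2 = s2 * (s2 - s1)) by (apply pow2_sqrt; nra).
  assert (HsqD : sqrt D2 <= sqrt D1 + 2 * s2 * t).
  { apply sqrt_le_add; [exact HD1 | nra |].
    replace ((2 * s2 * t) ^ 2) with (4 * s2 ^ 2 * t ^ 2) by ring. rewrite Et.
    pose proof chord_disc_growth as Hgrow. fold D1 D2 in Hgrow. nra. }
  pose proof (sqrt_pos D1).
  apply Rle_trans with (w2 * (sqrt D1 + 2 * s2 * t)); [apply Rmult_le_compat_l; lra |].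
  nra.
Qed.

End ChordVariation.

Lemma annulus_column_cover (k1 k2 x s1 s2 : R) :
  k2 ^ 2 <= k1 ^ 2 -> k1 ^ 2 + k2 ^ 2 < s2 ^ 2 -> 0 < s2 -> s1 <= s2 ->
  exists ys, INR (length ys) <= 8 * (s2 - s1) + 4 * sqrt (s2 * (s2 - s1)) + 4 /\
             covers_line ys (fun y => s1 <= focal_sum k1 k2 x y <= s2).
Proof.
  intros Hkk Hk2 Hs2 Hs12.
  set (c1 := chord_center k1 k2 s1 x). set (r1 := chord_radius k1 k2 s1 x).
  set (c2 := chord_center k1 k2 s2 x). set (r2 := chord_radius k1 k2 s2 x).
  set (t := sqrt (s2 * (s2 - s1))).
  assert (Ht : 0 <= t) by apply sqrt_pos.
  assert (Houter : forall y, focal_sum k1 k2 x y <= s2 -> c2 - r2 <= y <= c2 + r2)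
    by (intros y; apply chord_of_focal_sum_le; assumption).
  assert (Hcase : (0 < s1 /\ k1 ^ 2 + k2 ^ 2 < s1 ^ 2 /\ 0 <= chord_disc k1 k2 s1 x) \/
                  (s1 <= 0 \/ s1 ^ 2 <= k1 ^ 2 + k2 ^ 2 \/ chord_disc k1 k2 s1 x < 0)).
  { destruct (Rlt_le_dec 0 s1); destruct (Rlt_le_dec (k1 ^ 2 + k2 ^ 2) (s1 ^ 2));
      destruct (Rle_lt_dec 0 (chord_disc k1 k2 s1 x)); tauto. }
  destruct Hcase as [[Hs1 [Hk1 HD1]] | Hno].
  - (* the slice of the annulus is the chord at s2 minus the open chord at s1 *)
    pose proof (chord_center_shift k1 k2 x s1 s2 Hkk Hs1 Hs12 Hk1 HD1) as Hc.
    pose proof (chord_radius_growth k1 k2 x s1 s2 Hkk Hs1 Hs12 Hk1 HD1) as Hr.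
    fold c1 c2 r1 r2 t in Hc, Hr.
    pose proof (Rle_abs (c2 - c1)). pose proof (Rle_abs (- (c2 - c1))).
    rewrite Rabs_Ropp in *.
    destruct (covers_line_interval (c2 - r2) (c1 - r1)) as [ys1 [Hl1 Hc1]].
    destruct (covers_line_interval (c1 + r1) (c2 + r2)) as [ys2 [Hl2 Hc2]].
    exists (ys1 ++ ys2). split.
    + rewrite length_app, plus_INR.
      assert (Rmax 0 (c1 - r1 - (c2 - r2)) <= 4 * (s2 - s1) + 2 * t) by (apply Rmax_lub; lra).
      assert (Rmax 0 (c2 + r2 - (c1 + r1)) <= 4 * (s2 - s1) + 2 * t) by (apply Rmax_lub; lra).
      lra.
    + refine (covers_line_app _ _ _ _ _ _ Hc1 Hc2).
      intros y [Hlo Hhi]. pose proof (Houter y Hhi).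
      destruct (Rle_lt_dec y (c1 - r1)); [left; lra |].
      destruct (Rle_lt_dec (c1 + r1) y); [right; lra |].
      pose proof (focal_sum_lt_of_chord k1 k2 s1 Hs1 Hk1 x y ltac:(fold c1 r1; lra)). lra.
  - pose proof (chord_disc_le_of_no_chord k1 k2 s1 s2 x Hs2 Hs12 Hk2 Hno) as HD2.
    pose proof (chord_radius_le_of_disc_le k1 k2 s2 x (s2 - s1) Hs2 ltac:(lra) Hkk Hk2 HD2)
      as Hr2.
    fold r2 t in Hr2.
    destruct (covers_line_interval (c2 - r2) (c2 + r2)) as [ys [Hl Hcov]].
    exists ys. split.
    + assert (Rmax 0 (c2 + r2 - (c2 - r2)) <= 4 * t) by (apply Rmax_lub; lra).
      lra.
    + intros y [_ Hhi]. apply Hcov, Houter, Hhi.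
Qed.

Lemma focal_sum_shift_x (k1 k2 x x0 y : R) :
  focal_sum k1 k2 x0 y <= focal_sum k1 k2 x y + 2 * Rabs (x - x0).
Proof.
  unfold focal_sum.
  pose proof (sqrt_sum_sq_lipschitz x0 x y) as H1.
  pose proof (sqrt_sum_sq_lipschitz (k1 - x0) (k1 - x) (k2 - y)) as H2.
  rewrite Rabs_minus_sym in H1.
  replace (k1 - x0 - (k1 - x)) with (x - x0) in H2 by ring.
  lra.
Qed.

Lemma shell_set_iff (N L A k1 k2 x y : R) :
  shell_set N L A (k1, k2) (x, y) <->
  sqrt (x ^ 2 + y ^ 2) <= N /\ sqrt ((k1 - x) ^ 2 + (k2 - y) ^ 2) <= N /\
  A <= focal_sum k1 k2 x y <= A + L.
Proof. reflexivity. Qed.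

Lemma shell_set_swap (N L A k1 k2 x y : R) :
  shell_set N L A (k1, k2) (x, y) -> shell_set N L A (k2, k1) (y, x).
Proof.
  unfold shell_set, norm2, sub2. cbn [fst snd].
  rewrite (Rplus_comm (y ^ 2)), (Rplus_comm ((k2 - y) ^ 2)). tauto.
Qed.

Lemma shell_strip_cover (N L A k1 k2 x0 : R) :
  1 <= N -> 1 <= L -> k2 ^ 2 <= k1 ^ 2 -> sqrt (k1 ^ 2 + k2 ^ 2) <= A -> A <= 2 * N ->
  exists sq, INR (length sq) <= 64 * sqrt (N * L) /\
             covers sq (fun p => x0 <= fst p <= x0 + 1 /\ shell_set N L A (k1, k2) p).
Proof.
  intros HN HL Hkk HA HAN. pose proof (sqrt_pos (k1 ^ 2 + k2 ^ 2)).
  assert (HNL : 1 <= sqrt (N * L)) by (rewrite <- sqrt_1; apply sqrt_le_1_alt; nra).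
  destruct (Rle_lt_dec L N) as [HLN | HLN].
  - assert (Hk2 : k1 ^ 2 + k2 ^ 2 < (A + L + 2) ^ 2).
    { rewrite <- (sqrt_sum_sq_sq k1 k2). nra. }
    destruct (annulus_column_cover k1 k2 x0 (A - 2) (A + L + 2) Hkk Hk2 ltac:(lra) ltac:(lra))
      as [ys [Hl Hcov]].
    exists (map (fun t => (x0, t)) ys). split.
    + rewrite length_map. replace (A + L + 2 - (A - 2)) with (L + 4) in Hl by ring.
      assert (sqrt ((A + L + 2) * (L + 4)) <= 5 * sqrt (N * L)).
      { apply sqrt_le_of_le_sq; [nra |].
        rewrite Rpow_mult_distr, pow2_sqrt by nra.
        replace (5 ^ 2 * (N * L)) with ((5 * N) * (5 * L)) by ring.
        apply Rmult_le_compat; lra. }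
      pose proof (le_sqrt_mul L N ltac:(lra)) as HLs. rewrite (Rmult_comm L N) in HLs. lra.
    + refine (covers_weaken _ _ _ _ (covers_column x0 ys _ Hcov)).
      intros [x y] [Hx Hshell]. cbn [fst snd] in *.
      destruct (proj1 (shell_set_iff N L A k1 k2 x y) Hshell) as [_ [_ Hg]].
      split; [exact Hx |].
      assert (Rabs (x - x0) <= 1) by (apply Rabs_le; lra).
      assert (Rabs (x0 - x) <= 1) by (apply Rabs_le; lra).
      pose proof (focal_sum_shift_x k1 k2 x x0 y).
      pose proof (focal_sum_shift_x k1 k2 x0 x y).
      lra.
  - destruct (covers_line_interval (- N) N) as [ys [Hl Hcov]].
    exists (map (fun t => (x0, t)) ys). split.
    + rewrite length_map. rewrite Rmax_right in Hl by lra.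
      pose proof (le_sqrt_mul N L ltac:(lra)). lra.
    + refine (covers_weaken _ _ _ _ (covers_column x0 ys _ Hcov)).
      intros [x y] [Hx Hshell]. cbn [fst snd] in *.
      destruct (proj1 (shell_set_iff N L A k1 k2 x y) Hshell) as [Hxy _].
      split; [exact Hx |].
      pose proof (Rabs_le_sqrt_sum_sq y x) as Hy. rewrite Rplus_comm in Hy.
      pose proof (Rle_abs y). pose proof (Rle_abs (- y)). rewrite Rabs_Ropp in *. lra.
Qed.

Lemma shell_cover_ordered (N L A k1 k2 : R) :
  1 <= N -> 1 <= L -> k2 ^ 2 <= k1 ^ 2 -> sqrt (k1 ^ 2 + k2 ^ 2) <= A ->
  exists sq, INR (length sq) <= 192 * (N * sqrt (N * L)) /\ covers sq (shell_set N L A (k1, k2)).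
Proof.
  intros HN HL Hkk HA.
  assert (HNL : 1 <= sqrt (N * L)) by (rewrite <- sqrt_1; apply sqrt_le_1_alt; nra).
  destruct (Rlt_le_dec (2 * N) A) as [Hempty | HAN].
  { exists nil. split; [simpl; nra |].
    intros [x y] Hshell. destruct (proj1 (shell_set_iff N L A k1 k2 x y) Hshell) as [H1 [H2 H3]].
    unfold focal_sum in H3. lra. }
  destruct (nat_ceil_exists (2 * N)) as [M HM]; [lra |].
  destruct (covers_indexed_union
              (fun m p => - N + INR m <= fst p <= - N + INR m + 1 /\ shell_set N L A (k1, k2) p)
              (64 * sqrt (N * L)) M ltac:(lra)
              (fun m _ => shell_strip_cover N L A k1 k2 (- N + INR m) HN HL Hkk HA HAN))
    as [sq [Hl Hcov]].
  exists sq. split.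
  - apply Rle_trans with (INR M * (64 * sqrt (N * L))); [exact Hl |].
    apply Rle_trans with (3 * N * (64 * sqrt (N * L))); [apply Rmult_le_compat_r; lra | lra].
  - refine (covers_weaken _ _ _ _ Hcov).
    intros [x y] Hshell.
    destruct (proj1 (shell_set_iff N L A k1 k2 x y) Hshell) as [Hxy _].
    pose proof (Rabs_le_sqrt_sum_sq x y).
    pose proof (Rle_abs x). pose proof (Rle_abs (- x)). rewrite Rabs_Ropp in *.
    destruct (nat_floor_exists (x + N)) as [m Hm]; [lra |].
    exists m. split; [apply INR_lt; lra |]. split; [cbn [fst]; lra | exact Hshell].
Qed.

Theorem propositionA2 :
  exists C : R, 0 < C /\
  forall (N L : R), 1 <= N -> 1 <= L ->
  forall (k : R * R) (A : R), norm2 k <= A ->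
  exists squares : list (R * R),
    INR (length squares) <= C * Rpower N (3 / 2) * Rpower L (1 / 2) /\
    forall k' : R * R, shell_set N L A k k' ->
      exists c, In c squares /\ in_unit_square c k'.
Proof.
  exists 192. split; [lra |].
  intros N L HN HL [k1 k2] A HA.
  assert (Hpow : 192 * Rpower N (3 / 2) * Rpower L (1 / 2) = 192 * (N * sqrt (N * L))).
  { replace (3 / 2) with (1 + / 2) by field. replace (1 / 2) with (/ 2) by field.
    rewrite Rpower_plus, Rpower_1, !Rpower_sqrt, sqrt_mult by lra. ring. }
  rewrite Hpow.
  destruct (Rle_lt_dec (k2 ^ 2) (k1 ^ 2)) as [Hkk | Hkk].
  - exact (shell_cover_ordered N L A k1 k2 HN HL Hkk HA).
  -     assert (HA' : sqrt (k2 ^ 2 + k1 ^ 2) <= A) by (rewrite Rplus_comm; exact HA).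
    destruct (shell_cover_ordered N L A k2 k1 HN HL (Rlt_le _ _ Hkk) HA') as [sq [Hl Hcov]].
    exists (map (fun c => (snd c, fst c)) sq). split; [rewrite length_map; exact Hl |].
    refine (covers_weaken _ _ _ _ (covers_swap sq _ Hcov)).
    intros [x y]. apply shell_set_swap.
Qed.
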